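(* Let $\delta>0$ and $n\in\mathbb N$ with $n\delta=1$. For every $u\in U^n_\#(\delta\mathbb Z)$, \[ |u|_{H^{-1}}\le\frac1{2\sqrt3}\|u\|_{L^2}. \]
   Context: For $\delta>0$, $n\in\mathbb N$, set $X_i=\delta i$. $U^n_\#(\delta\mathbb Z)$ is the space of functions $u:\delta\mathbb Z\to\mathbb R$ with $u(X_{i+n})=u(X_i)$ for all $i$ and $\frac1n\sum_{i=1}^nu(X_i)=0$. $\langle u,v\rangle=\frac1n\sum_{i=1}^nu(X_i)v(X_i)$, $\|u\|_{L^2}=\langle u,u\rangle^{1/2}$, $Du(X_i)=(u(X_{i+1})-u(X_i))/\delta$, $|u|_{H^1}=\|Du\|_{L^2}$, $|u|_{H^{-1}}=\sup\{\langle u,w\rangle/|w|_{H^1}:0\ne w\in U^n_\#(\delta\mathbb Z)\}$. *)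

From mathcomp Require Import all_boot all_order all_algebra.
From mathcomp Require Import boolp classical_sets reals.
Set Implicit Arguments. Unset Strict Implicit. Unset Printing Implicit Defensive.
Import Order.TTheory GRing.Theory Num.Theory.
Local Open Scope ring_scope.
Local Open Scope classical_set_scope.

(* A grid function u : δZ -> R is represented by i |-> u(X_i), i.e. u : int -> R. *)
Section Grid.
Variable R : realType.

Definition in_Uper (n : nat) (u : int -> R) : Prop :=
  (forall i : int, u (i + n%:Z)%R = u i) /\
  n%:R^-1 * \sum_(1 <= i < n.+1) u i%:Z = 0.

Definition ip (n : nat) (u v : int -> R) : R :=
  n%:R^-1 * \sum_(1 <= i < n.+1) u i%:Z * v i%:Z.

Definition L2norm (n : nat) (u : int -> R) : R := Num.sqrt (ip n u u).

Definition Dgrid (delta : R) (u : int -> R) : int -> R :=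
  fun i => (u (i + 1)%R - u i) / delta.

Definition H1semi (n : nat) (delta : R) (u : int -> R) : R :=
  L2norm n (Dgrid delta u).

Definition Hm1norm (n : nat) (delta : R) (u : int -> R) : R :=
  sup [set r : R | exists w : int -> R,
         [/\ in_Uper n w, w <> (fun _ => 0) & r = ip n u w / H1semi n delta w]].
End Grid.

From mathcomp Require Import all_boot all_order all_algebra.
From mathcomp Require Import boolp classical_sets reals.
From mathcomp Require Import ring lra.
Import Order.TTheory GRing.Theory Num.Theory.
Local Open Scope ring_scope.

(* By Cauchy-Schwarz, <u, w> <= |u|_{L2} |w|_{L2}, so it suffices to prove the
   discrete Poincare inequality 12 |w|_{L2}^2 <= |w|_{H1}^2 for periodic
   mean-zero w when n delta = 1.  Since w has mean zero, the sum of
   (w_{i+k} - w_i)^2 over all i and all shifts k < n equals 2 n sum w^2.  Each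
   difference telescopes along either arc of the discrete circle, of lengths k
   and n - k, and Cauchy-Schwarz on both arcs bounds n (w_{i+k} - w_i)^2 by
   k (n - k) times the sum of the squared forward differences of w; finally
   sum_{k<n} k (n - k) = (n^3 - n) / 6. *)

Section Sums.
Context {R : realFieldType}.

Lemma cauchy_schwarz_sum {I : Type} (r : seq I) (f g : I -> R) :
  (\sum_(i <- r) f i * g i) ^+ 2 <=
  (\sum_(i <- r) f i ^+ 2) * (\sum_(i <- r) g i ^+ 2).
Proof.
have lagrange : \sum_(i <- r) \sum_(j <- r) (f i * g j - f j * g i) ^+ 2 =
    \sum_(i <- r) \sum_(j <- r) f i ^+ 2 * g j ^+ 2
  + \sum_(i <- r) \sum_(j <- r) g i ^+ 2 * f j ^+ 2
  - \sum_(i <- r) \sum_(j <- r) (2 * (f i * g i)) * (f j * g j).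
  rewrite -big_split -sumrB /=; apply: eq_bigr => i _.
  by rewrite -big_split -sumrB /=; apply: eq_bigr => j _; ring.
have : 0 <= \sum_(i <- r) \sum_(j <- r) (f i * g j - f j * g i) ^+ 2.
  by apply: sumr_ge0 => i _; apply: sumr_ge0 => j _; exact: sqr_ge0.
rewrite lagrange -!big_distrlr /= -mulr_sumr; lra.
Qed.

Lemma sqr_sum_nat_le (m p : nat) (f : nat -> R) :
  (\sum_(m <= l < p) f l) ^+ 2 <= (p - m)%:R * \sum_(m <= l < p) f l ^+ 2.
Proof.
have := cauchy_schwarz_sum (index_iota m p) (fun=> 1) f.
by rewrite /= sumr_const_nat expr1n; under eq_bigr do rewrite mul1r.
Qed.

Lemma sum_sqr_sub_pairs (m p : nat) (f : nat -> R) :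
  \sum_(m <= i < p) \sum_(m <= j < p) (f j - f i) ^+ 2 =
  2 * ((p - m)%:R * \sum_(m <= i < p) f i ^+ 2 - (\sum_(m <= i < p) f i) ^+ 2).
Proof.
have -> : \sum_(m <= i < p) \sum_(m <= j < p) (f j - f i) ^+ 2 =
    \sum_(m <= i < p) \sum_(m <= j < p) 1 * f j ^+ 2
  + \sum_(m <= i < p) \sum_(m <= j < p) f i ^+ 2 * 1
  - \sum_(m <= i < p) \sum_(m <= j < p) (2 * f i) * f j.
  rewrite -big_split -sumrB /=; apply: eq_bigr => i _.
  by rewrite -big_split -sumrB /=; apply: eq_bigr => j _; ring.
rewrite -!big_distrlr /= -mulr_sumr !sumr_const_nat -mulr_natl; ring.
Qed.

Lemma sum_natr (m : nat) : \sum_(0 <= k < m) (k%:R : R) = m%:R * (m%:R - 1) / 2.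
Proof.
elim: m => [|m IH]; first by rewrite big_geq //; ring.
by rewrite big_nat_recr //= IH -addn1 natrD; field.
Qed.

Lemma sum_natr_sqr (m : nat) :
  \sum_(0 <= k < m) (k%:R : R) ^+ 2 = (m%:R - 1) * m%:R * (2 * m%:R - 1) / 6.
Proof.
elim: m => [|m IH]; first by rewrite big_geq //; ring.
by rewrite big_nat_recr //= IH -addn1 natrD; field.
Qed.

Lemma sum_natr_mul_complement (m : nat) :
  6 * \sum_(0 <= k < m) (k%:R : R) * (m%:R - k%:R) = m%:R ^+ 3 - m%:R.
Proof.
rewrite (eq_bigr (fun k => m%:R * k%:R - k%:R ^+ 2)); last by move=> k _; ring.
by rewrite sumrB -mulr_sumr sum_natr sum_natr_sqr; field.
Qed.

Definition fdiff (w : int -> R) (i : int) : R := w (i + 1) - w i.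

Lemma sum_fdiff (w : int -> R) (i : int) (m p : nat) : (m <= p)%N ->
  \sum_(m <= l < p) fdiff w (i + l%:Z) = w (i + p%:Z) - w (i + m%:Z).
Proof.
move=> le_mp; rewrite -(telescope_sumr (fun l => w (i + l%:Z)) le_mp).
by apply: eq_bigr => l _; rewrite /fdiff intS (addrC 1) addrA.
Qed.

Definition periodic (p : nat) (f : int -> R) : Prop :=
  forall i : int, f (i + p%:Z) = f i.

Variable n : nat.

Lemma sum_periodic_window (f : int -> R) (m : nat) : periodic n f ->
  \sum_(0 <= k < n) f (m%:Z + k%:Z) = \sum_(0 <= k < n) f k%:Z.
Proof.
move=> per_f; elim: m => [|m <-]; first by under eq_bigr do rewrite add0r.
move: per_f; case: n => [|p] per_f; first by rewrite !big_geq.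
have shift (k : nat) : f (m.+1%:Z + k%:Z) = f (m%:Z + k.+1%:Z).
  by congr f; rewrite !intS; ring.
rewrite big_nat_recr // [RHS]big_nat_recl //= addr0 shift per_f addrC.
by congr (_ + _); apply: eq_bigr => k _; rewrite shift.
Qed.

Lemma sum_periodic_shift1 (f : int -> R) : periodic n f ->
  \sum_(1 <= i < n.+1) f i%:Z = \sum_(0 <= k < n) f k%:Z.
Proof.
move=> per_f; rewrite -(sum_periodic_window _ 1 per_f) big_add1 /=.
by apply: eq_bigr => k _; rewrite intS.
Qed.

Lemma fdiff_periodic (w : int -> R) : periodic n w -> periodic n (fdiff w).
Proof. by move=> per_w i; rewrite /fdiff addrAC !per_w. Qed.

Lemma sqr_sub_le_arcs (w : int -> R) (i : int) (k : nat) :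
  periodic n w -> (k <= n)%N ->
  n%:R * (w (i + k%:Z) - w i) ^+ 2 <=
  k%:R * (n%:R - k%:R) * \sum_(0 <= l < n) fdiff w (i + l%:Z) ^+ 2.
Proof.
move=> per_w le_kn.
have arc1 := sqr_sum_nat_le 0 k (fun l => fdiff w (i + l%:Z)).
have arc2 := sqr_sum_nat_le k n (fun l => fdiff w (i + l%:Z)).
rewrite /= !sum_fdiff // addr0 subn0 in arc1 arc2.
rewrite per_w -opprB sqrrN in arc2.
rewrite (big_cat_nat (leq0n k) le_kn) /= -natrB //.
have := ler_wpM2l (ler0n _ (n - k)) arc1.
have := ler_wpM2l (ler0n _ k) arc2.
have -> : (n%:R : R) = k%:R + (n - k)%:R by rewrite -natrD subnKC.
nra.
Qed.

Lemma sum_sqr_sub_shifts (w : int -> R) : periodic n w ->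
  \sum_(0 <= i < n) \sum_(0 <= k < n) (w (i%:Z + k%:Z) - w i%:Z) ^+ 2 =
  2 * (n%:R * \sum_(0 <= i < n) w i%:Z ^+ 2 - (\sum_(0 <= i < n) w i%:Z) ^+ 2).
Proof.
move=> per_w; have := sum_sqr_sub_pairs 0 n (fun i => w i%:Z).
rewrite subn0 => <-; apply: eq_bigr => i _.
by apply: (sum_periodic_window (fun j => (w j - w i%:Z) ^+ 2)) => j; rewrite per_w.
Qed.

Lemma poincare_periodic (w : int -> R) :
  periodic n w -> \sum_(0 <= i < n) w i%:Z = 0 ->
  12 * \sum_(0 <= i < n) w i%:Z ^+ 2 <=
  n%:R ^+ 2 * \sum_(0 <= l < n) fdiff w l%:Z ^+ 2.
Proof.
move=> per_w sum_w0.
have [n0|n_gt0] := posnP n; first by rewrite n0 !big_geq // !mulr0.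
set W := \sum_(0 <= i < n) _; set D := \sum_(0 <= l < n) _.
set T := \sum_(0 <= k < n) (k%:R : R) * (n%:R - k%:R).
have window_fdiff (i : nat) : \sum_(0 <= l < n) fdiff w (i%:Z + l%:Z) ^+ 2 = D.
  apply: (sum_periodic_window (fun j => fdiff w j ^+ 2)) => j.
  by rewrite fdiff_periodic.
have arcs : n%:R * (2 * (n%:R * W)) <= n%:R * (T * D).
  have := sum_sqr_sub_shifts w per_w; rewrite sum_w0 expr0n subr0 -/W => <-.
  have -> : n%:R * (T * D) = \sum_(0 <= i < n) T * D.
    by rewrite sumr_const_nat subn0 mulr_natl.
  rewrite mulr_sumr; apply: ler_sum_nat => i _; rewrite mulr_sumr mulr_suml.
  apply: ler_sum_nat => k /andP[_ lt_kn].
  by rewrite -(window_fdiff i) sqr_sub_le_arcs // ltnW.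
have D_ge0 : 0 <= D by apply: sumr_ge0 => l _; exact: sqr_ge0.
have n2_pos : (0 < n%:R ^+ 2 :> R) by rewrite exprn_gt0 ?ltr0n.
have := congr1 (fun x => x * (n%:R * D)) (sum_natr_mul_complement n).
rewrite -/T -(ler_pM2l n2_pos); nra.
Qed.

End Sums.

Section Norms.
Context {R : realType}.
Variable n : nat.
Implicit Types u v w : int -> R.

Lemma ip_ge0 u : 0 <= ip n u u.
Proof.
rewrite /ip mulr_ge0 ?invr_ge0 //.
by apply: sumr_ge0 => i _; rewrite -expr2 sqr_ge0.
Qed.

Lemma ip_sqr_le u v : ip n u v ^+ 2 <= ip n u u * ip n v v.
Proof.
have sum_sqr (f : int -> R) :
  \sum_(1 <= i < n.+1) f i%:Z * f i%:Z = \sum_(1 <= i < n.+1) f i%:Z ^+ 2.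
  by under eq_bigr do rewrite -expr2.
rewrite /ip !sum_sqr exprMn [X in _ <= X]mulrACA -expr2.
by apply: ler_wpM2l; [exact: sqr_ge0 | exact: (cauchy_schwarz_sum _ (fun i => u i%:Z))].
Qed.

Lemma ip_le_L2norm u v : ip n u v <= L2norm n u * L2norm n v.
Proof.
rewrite /L2norm -sqrtrM ?ip_ge0 // (le_trans (ler_norm _)) //.
by rewrite -sqrtr_sqr ler_sqrt ?ip_sqr_le // mulr_ge0 ?ip_ge0.
Qed.

Lemma ip_self w :
  ip n w w = n%:R^-1 * \sum_(1 <= i < n.+1) w i%:Z ^+ 2.
Proof. by rewrite /ip; under eq_bigr do rewrite -expr2. Qed.

Lemma L2norm_le_H1semi (delta : R) w : n%:R * delta = 1 -> in_Uper n w ->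
  L2norm n w <= (2 * Num.sqrt 3)^-1 * H1semi n delta w.
Proof.
move=> n_delta [per_w mean_w0].
have n_pos : (0 < n%:R :> R).
  rewrite lt_def ler0n andbT; apply: contra_eqN n_delta => /eqP->.
  by rewrite mul0r eq_sym oner_eq0.
have delta_inv : delta = n%:R^-1.
  by rewrite -[delta](mulKf (lt0r_neq0 n_pos)) n_delta mulr1.
have sum_w0 : \sum_(1 <= i < n.+1) w i%:Z = 0.
  by move/eqP: mean_w0; rewrite mulf_eq0 invr_eq0 (gt_eqF n_pos) => /eqP.
have poincare : 12 * \sum_(1 <= i < n.+1) w i%:Z ^+ 2 <=
    n%:R ^+ 2 * \sum_(1 <= i < n.+1) fdiff w i%:Z ^+ 2.
  rewrite (sum_periodic_shift1 _ (fun i => w i ^+ 2)); last by move=> i; rewrite /= per_w.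
  rewrite (sum_periodic_shift1 _ (fun i => fdiff w i ^+ 2)); last first.
    by move=> i; rewrite /= fdiff_periodic.
  by apply: poincare_periodic; move: sum_w0; rewrite (sum_periodic_shift1 _ w per_w).
have ip_Dgrid : ip n (Dgrid delta w) (Dgrid delta w) =
    n%:R * \sum_(1 <= i < n.+1) fdiff w i%:Z ^+ 2.
  rewrite /ip /Dgrid delta_inv !mulr_sumr; apply: eq_bigr => i _.
  by rewrite /fdiff invrK; field; rewrite gt_eqF.
set c := (2 * Num.sqrt 3)^-1.
have c_ge0 : 0 <= c by rewrite invr_ge0 mulr_ge0 ?sqrtr_ge0.
have c_sqr : c ^+ 2 = 12^-1.
  by rewrite exprVn exprMn sqr_sqrtr // -natrX -natrM.
rewrite /H1semi /L2norm -(ger0_norm c_ge0) -sqrtr_sqr -sqrtrM ?sqr_ge0 //.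
rewrite ler_sqrt; last by rewrite mulr_ge0 ?sqr_ge0 ?ip_ge0.
rewrite c_sqr ip_Dgrid ip_self -(ler_pM2l n_pos) mulrA divff ?lt0r_neq0 // mul1r.
nra.
Qed.

Lemma Hm1norm_le (delta : R) u (C : R) : 0 <= C ->
  (forall w, in_Uper n w -> ip n u w <= C * H1semi n delta w) ->
  Hm1norm n delta u <= C.
Proof.
(* An empty set has supremum 0, and a vanishing seminorm gives the quotient
   0 (x / 0 = 0); both are covered by [0 <= C]. *)
move=> C_ge0 pairing_le; rewrite /Hm1norm; set E := (X in sup X).
have [[r Er]|E0] := pselect (E !=set0)%classic; last first.
  by rewrite (_ : E = set0) ?sup0 // -subset0 => r Er; apply: E0; exists r.
apply: ge_sup; first by exists r.
move=> _ [w [w_per _ ->]].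
have [H0|H_pos] := eqVneq (H1semi n delta w) 0; first by rewrite H0 invr0 mulr0.
have H_gt0 : 0 < H1semi n delta w by rewrite lt_def H_pos sqrtr_ge0.
by rewrite ler_pdivrMr // pairing_le.
Qed.

End Norms.

Theorem lemma9p6 (R : realType) (delta : R) (n : nat)
  (hdelta : 0 < delta) (hn : n%:R * delta = 1)
  (u : int -> R) (hu : in_Uper n u) :
  Hm1norm n delta u <= (2 * Num.sqrt 3)^-1 * L2norm n u.
Proof.
apply: Hm1norm_le => [|w w_per]; first by rewrite mulr_ge0 ?invr_ge0 ?mulr_ge0 ?sqrtr_ge0.
rewrite -mulrA mulrCA (le_trans (ip_le_L2norm n u w)) //.
by rewrite ler_wpM2l ?sqrtr_ge0 // L2norm_le_H1semi.
Qed.
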